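(* Let $\mathcal M=\{A,B,C,D\}$ be a minimal realization of a discrete-time passive system and let $X\in\mathbb X^{>}(\mathcal M)$. Then there is a unique maximal real number $\xi^*(X)$ such that the matrix inequality $$\widetilde W(X,\mathcal M)\ \ge\ \xi\,\operatorname{diag}(X,X,2I_m)$$ holds for $\xi=\xi^*(X)$, and $\xi^*(X)<1$. Moreover, writing $X=T^{\mathsf H}T$ with $T$ nonsingular, $\xi^*(X)=\lambda_{\min}\big(D_s\widetilde W(I_n,\mathcal M_T)D_s\big)$.
   Context: A discrete-time model is $\mathcal M=\{A,B,C,D\}$ with $A\in\mathbb C^{n\times n}$, $B\in\mathbb C^{n\times m}$, $C\in\mathbb C^{m\times n}$, $D\in\mathbb C^{m\times m}$ (system $x_{k+1}=Ax_k+Bu_k$, $y_k=Cx_k+Du_k$), with transfer function $\mathcal T(z)=C(zI_n-A)^{-1}B+D$. It is minimal if $\operatorname{rank}[zI_n-A\ \ B]=n$ and $\operatorname{rank}[zI_n-A^{\mathsf H}\ \ C^{\mathsf H}]=n$ for all $z\in\mathbb C$. The system is passive if $\mathcal T(e^{\imath\omega})^{\mathsf H}+\mathcal T(e^{\imath\omega})\ge0$ for all $\omega\in[-\pi,\pi]$ and all eigenvalues of $A$ lie in the closed unit disc with those on the unit circle semisimple. $\mathbb H_n$ is the set of $n\times n$ Hermitian matrices. For $X\in\mathbb H_n$, $$W(X,\mathcal M)=\begin{bmatrix} X-A^{\mathsf H}XA & C^{\mathsf H}-A^{\mathsf H}XB\\ C-B^{\mathsf H}XA & D^{\mathsf H}+D-B^{\mathsf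 H}XB\end{bmatrix},\qquad \widetilde W(X,\mathcal M)=\begin{bmatrix} X & XA & XB\\ A^{\mathsf H}X & X & C^{\mathsf H}\\ B^{\mathsf H}X & C & D^{\mathsf H}+D\end{bmatrix},$$ and $\mathbb X^{>}(\mathcal M)=\{X\in\mathbb H_n: W(X,\mathcal M)\ge0,\ X>0\}$. $D_s=\operatorname{diag}(I_n,I_n,I_m/\sqrt2)$; for nonsingular $T$, $\mathcal M_T=\{TAT^{-1},TB,CT^{-1},D\}$. *)

(* Complex scalars: an arbitrary numClosedFieldType C
   (the complex numbers are one instance). *)
From HB Require Import structures.
From mathcomp Require Import all_boot all_order all_algebra.
Set Implicit Arguments. Unset Strict Implicit. Unset Printing Implicit Defensive.
Import Order.TTheory GRing.Theory Num.Theory.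
Local Open Scope ring_scope.

Section Defs.
Variable C : numClosedFieldType.

Definition ctmx (p q : nat) (A : 'M[C]_(p, q)) : 'M[C]_(q, p) := (map_mx Num.conj A)^T.

Definition hermitian (p : nat) (M : 'M[C]_p) : Prop := ctmx M = M.

Definition psd (p : nat) (M : 'M[C]_p) : Prop :=
  hermitian M /\ forall v : 'cV[C]_p, 0 <= (ctmx v *m M *m v) 0 0.

Definition pd (p : nat) (M : 'M[C]_p) : Prop :=
  hermitian M /\ forall v : 'cV[C]_p, v != 0 -> 0 < (ctmx v *m M *m v) 0 0.

Definition loewner_ge (p : nat) (M1 M2 : 'M[C]_p) : Prop := psd (M1 - M2).

Definition transfer (n m : nat) (A : 'M[C]_n) (B : 'M[C]_(n, m))
  (Cm : 'M[C]_(m, n)) (D : 'M[C]_m) (z : C) : 'M[C]_m :=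
  Cm *m invmx (z%:M - A) *m B + D.

Definition minimal (n m : nat) (A : 'M[C]_n) (B : 'M[C]_(n, m))
  (Cm : 'M[C]_(m, n)) : Prop :=
  forall z : C, \rank (row_mx (z%:M - A) B) = n /\
                \rank (row_mx (z%:M - ctmx A) (ctmx Cm)) = n.

Definition semisimple_eig (n : nat) (A : 'M[C]_n) (l : C) : Prop :=
  mup l (char_poly A) = \rank (eigenspace A l).

Definition passive (n m : nat) (A : 'M[C]_n) (B : 'M[C]_(n, m))
  (Cm : 'M[C]_(m, n)) (D : 'M[C]_m) : Prop :=
  (forall z : C, `|z| = 1 -> (z%:M - A) \in unitmx ->
     psd (ctmx (transfer A B Cm D z) + transfer A B Cm D z)) /\
  (forall l : C, eigenvalue A l -> `|l| <= 1 /\ (`|l| = 1 -> semisimple_eig A l)).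

Definition Wmat (n m : nat) (A : 'M[C]_n) (B : 'M[C]_(n, m))
  (Cm : 'M[C]_(m, n)) (D : 'M[C]_m) (X : 'M[C]_n) : 'M[C]_(n + m) :=
  block_mx (X - ctmx A *m X *m A) (ctmx Cm - ctmx A *m X *m B)
           (Cm - ctmx B *m X *m A) (ctmx D + D - ctmx B *m X *m B).

Definition Wtilde (n m : nat) (A : 'M[C]_n) (B : 'M[C]_(n, m))
  (Cm : 'M[C]_(m, n)) (D : 'M[C]_m) (X : 'M[C]_n) : 'M[C]_(n + n + m) :=
  block_mx (block_mx X (X *m A) (ctmx A *m X) X)
           (col_mx (X *m B) (ctmx Cm))
           (row_mx (ctmx B *m X) Cm)
           (ctmx D + D).

Definition Xgt (n m : nat) (A : 'M[C]_n) (B : 'M[C]_(n, m))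
  (Cm : 'M[C]_(m, n)) (D : 'M[C]_m) (X : 'M[C]_n) : Prop :=
  hermitian X /\ psd (Wmat A B Cm D X) /\ pd X.

Definition diagXX2 (n m : nat) (X : 'M[C]_n) : 'M[C]_(n + n + m) :=
  block_mx (block_mx X 0 0 X) 0 0 (2%:M).

Definition Ds (n m : nat) : 'M[C]_(n + n + m) :=
  block_mx 1%:M 0 0 ((sqrtC 2)^-1)%:M.

Definition is_lambda_min (p : nat) (M : 'M[C]_p) (l : C) : Prop :=
  eigenvalue M l /\ forall mu : C, eigenvalue M mu -> l <= mu.

End Defs.

(* Write X = T^H T and S = diag(T, T, sqrt 2 I).  A change of state coordinates by T gives
   S^H (D_s W~(I, M_T) D_s - xi I) S = W~(X, M) - xi diag(X, X, 2 I),
   so by congruence the admissible xi are exactly the real numbers below the smallest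
   eigenvalue of the Hermitian matrix D_s W~(I, M_T) D_s, whatever the factor T.
   For xi = 1 the leading diagonal block of W~(X, M) - diag(X, X, 2 I) vanishes, so positive
   semidefiniteness forces XA = 0 and XB = 0; as X is invertible, A = B = 0, which contradicts
   minimality at z = 0. *)

From HB Require Import structures.
From mathcomp Require Import all_boot all_order all_algebra.
From mathcomp Require Import sesquilinear spectral ring.
Import Order.TTheory GRing.Theory Num.Theory Num.Def.
Set Implicit Arguments. Unset Strict Implicit. Unset Printing Implicit Defensive.
Local Open Scope ring_scope.
Local Open Scope sesquilinear_scope.

Section ConjugateTranspose.
Variable C : numClosedFieldType.
Implicit Types (p q r : nat).

Lemma ctmxE p q (A : 'M[C]_(p, q)) i j : ctmx A i j = (A j i)^*.
Proof. by rewrite !mxE. Qed.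

Lemma ctmx_trmxC p q (A : 'M[C]_(p, q)) : ctmx A = A ^t*.
Proof. by rewrite /ctmx map_trmx. Qed.

Lemma ctmxK p q (A : 'M[C]_(p, q)) : ctmx (ctmx A) = A.
Proof. by apply/matrixP=> i j; rewrite !ctmxE conjCK. Qed.

Lemma ctmxM p q r (A : 'M[C]_(p, q)) (B : 'M[C]_(q, r)) :
  ctmx (A *m B) = ctmx B *m ctmx A.
Proof. by rewrite /ctmx map_mxM trmx_mul. Qed.

Lemma ctmxD p q (A B : 'M[C]_(p, q)) : ctmx (A + B) = ctmx A + ctmx B.
Proof. by apply/matrixP=> i j; rewrite !(ctmxE, mxE) rmorphD. Qed.

Lemma ctmxB p q (A B : 'M[C]_(p, q)) : ctmx (A - B) = ctmx A - ctmx B.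
Proof. by apply/matrixP=> i j; rewrite !(ctmxE, mxE) rmorphB. Qed.

Lemma ctmxZ p q a (A : 'M[C]_(p, q)) : ctmx (a *: A) = a^* *: ctmx A.
Proof. by apply/matrixP=> i j; rewrite !(ctmxE, mxE) rmorphM. Qed.

Lemma ctmx_scalar p a : ctmx (a%:M : 'M[C]_p) = a^*%:M.
Proof. by apply/matrixP=> i j; rewrite !(ctmxE, mxE) rmorphMn eq_sym. Qed.

Lemma ctmx0 p q : ctmx (0 : 'M[C]_(p, q)) = 0.
Proof. by apply/matrixP=> i j; rewrite !(ctmxE, mxE) rmorph0. Qed.

Lemma ctmx1 p : ctmx (1%:M : 'M[C]_p) = 1%:M.
Proof. by rewrite ctmx_scalar rmorph1. Qed.

Lemma ctmx_diag p (d : 'rV[C]_p) : ctmx (diag_mx d) = diag_mx (map_mx conjC d).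
Proof. by rewrite /ctmx map_diag_mx tr_diag_mx. Qed.

Lemma ctmx_block p1 p2 q1 q2 (A : 'M[C]_(p1, q1)) (B : 'M[C]_(p1, q2))
    (E : 'M[C]_(p2, q1)) (F : 'M[C]_(p2, q2)) :
  ctmx (block_mx A B E F) = block_mx (ctmx A) (ctmx E) (ctmx B) (ctmx F).
Proof. by rewrite /ctmx map_block_mx tr_block_mx. Qed.

Lemma ctmx_row p q1 q2 (A : 'M[C]_(p, q1)) (B : 'M[C]_(p, q2)) :
  ctmx (row_mx A B) = col_mx (ctmx A) (ctmx B).
Proof. by rewrite /ctmx map_row_mx tr_row_mx. Qed.

Lemma ctmx_col p1 p2 q (A : 'M[C]_(p1, q)) (B : 'M[C]_(p2, q)) :
  ctmx (col_mx A B) = row_mx (ctmx A) (ctmx B).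
Proof. by rewrite /ctmx map_col_mx tr_col_mx. Qed.

Lemma ctmx_unit p (A : 'M[C]_p) : (ctmx A \in unitmx) = (A \in unitmx).
Proof. by rewrite /ctmx unitmx_tr map_unitmx. Qed.

Lemma ctmx_inv p (A : 'M[C]_p) : ctmx (invmx A) = invmx (ctmx A).
Proof. by rewrite /ctmx map_invmx trmx_inv. Qed.

Lemma ctmx_delta_mul_delta p (M : 'M[C]_p) i j :
  ctmx (delta_mx i 0 : 'cV[C]_p) *m M *m delta_mx j 0 = (M i j)%:M.
Proof.
have -> : ctmx (delta_mx i 0 : 'cV[C]_p) = delta_mx 0 i :> 'rV[C]_p.
  by apply/matrixP=> a b; rewrite ctmxE !mxE ord1 !eqxx andbT rmorph_nat.
by apply/matrixP=> a b; rewrite !ord1 -rowE -colE !mxE eqxx mulr1n.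
Qed.

End ConjugateTranspose.

Section PositiveSemidefinite.
Variables (C : numClosedFieldType) (p : nat).
Implicit Types M S : 'M[C]_p.

Lemma hermitian_hermsymmx M : hermitian M -> M \is hermsymmx.
Proof.
by move=> hM; apply/is_hermitianmxP; rewrite expr0 scale1r -ctmx_trmxC hM.
Qed.

Lemma psd_congrmx M S : S \in unitmx -> psd M <-> psd (ctmx S *m M *m S).
Proof.
move=> S_unit; split=> [[hM M_ge0]|[hSMS SMS_ge0]]; split.
- by rewrite /hermitian !ctmxM ctmxK hM mulmxA.
- by move=> v; have := M_ge0 (S *m v); rewrite ctmxM !mulmxA.
- move: hSMS; rewrite /hermitian !ctmxM ctmxK mulmxA.
  move=> /(congr1 (fun Y => invmx (ctmx S) *m Y *m invmx S)).
  by rewrite !mulmxA !mulmxK // mulVmx ?ctmx_unit // !mul1mx.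
- move=> v; have := SMS_ge0 (invmx S *m v).
  by rewrite ctmxM ctmx_inv !mulmxA mulmxKV ?ctmx_unit // mulmxK.
Qed.

Lemma psd_offdiag_eq0 M i j : psd M -> M i i = 0 -> M i j = 0.
Proof.
move=> [hM M_ge0] Mii0; have [<- //|_] := eqVneq i j.
set a := M i j.
have Mji : M j i = a^* by rewrite -hM ctmxE.
have Mjj_real : M j j \is Num.real by apply/CrealP; rewrite -[in RHS]hM ctmxE.
apply/eqP/negPn/negP => a_neq0.
(* The form at [t e_i + e_j] is [|t|^2 M_ii + 2 Re (t^* a) + M_jj]; this [t] makes it [-1]. *)
set r := (M j j + 1) / (2 * `|a| ^+ 2).
have r_real : r \is Num.real.
  by rewrite rpredM ?rpredV ?rpredD ?rpred1 ?rpredM ?rpred_nat ?realX ?normr_real.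
set t := - a * r.
have := M_ge0 (t *: delta_mx i 0 + delta_mx j 0).
rewrite ctmxD ctmxZ !mulmxDl !mulmxDr -!scalemxAl -!scalemxAr.
rewrite !ctmx_delta_mul_delta !mxE !eqxx !mulr1n Mii0 Mji -/a.
suff -> : t^* * (t * 0) + t^* * a + (t * a^* + M j j) = -1 by rewrite ler0N1.
rewrite /t rmorphM rmorphN /= (conj_Creal r_real) /r normCK.
by field; rewrite a_neq0 conjC_eq0 a_neq0.
Qed.

End PositiveSemidefinite.

Lemma exists_real_argmin (R : numDomainType) (I : finType) (i0 : I) (f : I -> R) :
  (forall i, f i \is Num.real) -> exists i, forall j, f i <= f j.
Proof.
move=> f_real.
suff [i _ i_min] : exists2 i, i \in i0 :: enum I & {in i0 :: enum I, forall j, f i <= f j}.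
  by exists i => j; apply: i_min; rewrite inE mem_enum orbT.
elim: (enum I) i0 => [|j s IHs] i0.
  by exists i0 => [|k]; rewrite ?mem_head // inE => /eqP ->.
have [i i_in i_min] := IHs j.
case/orP: (real_leVge (f_real i0) (f_real i)) => [le_i0i|le_ii0].
- exists i0 => [|k]; first exact: mem_head.
  by rewrite inE => /predU1P [-> //|/i_min]; apply: le_trans.
- exists i => [|k]; first by rewrite inE i_in orbT.
  by rewrite inE => /predU1P [-> //|/i_min].
Qed.

Section UnitaryDiagonalization.
Variables (C : numClosedFieldType) (N : nat) (H P : 'M[C]_N) (d : 'rV[C]_N).
Hypotheses (P_unit : P \in unitmx) (P_inv : invmx P = ctmx P).
Hypotheses (HPd : H = ctmx P *m diag_mx d *m P) (d_real : forall i, d 0 i \is Num.real).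

Lemma diagonalized_hermitian : hermitian H.
Proof.
rewrite /hermitian HPd !ctmxM ctmxK ctmx_diag mulmxA; congr (_ *m diag_mx _ *m _).
by apply/rowP=> i; rewrite mxE conj_Creal.
Qed.

Lemma quad_form_diagonalized xi (v : 'cV[C]_N) :
  (ctmx v *m (H - xi%:M) *m v) 0 0 = \sum_i (d 0 i - xi) * `|(P *m v) i 0| ^+ 2.
Proof.
have -> : H - xi%:M = ctmx P *m diag_mx (d - const_mx xi) *m P.
  rewrite linearB /= diag_const_mx mulmxBr mulmxBl -HPd mul_mx_scalar.
  by rewrite -scalemxAl -P_inv mulVmx // scalemx1.
rewrite !mulmxA -ctmxM -mulmxA mxE; apply: eq_bigr => i _.
by rewrite mul_mx_diag !mxE normCK; ring.
Qed.

Lemma quad_form_eigvec xi i :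
  (ctmx (ctmx P *m (delta_mx i 0 : 'cV_N)) *m (H - xi%:M) *m (ctmx P *m (delta_mx i 0 : 'cV_N))) 0 0 = d 0 i - xi.
Proof.
rewrite quad_form_diagonalized mulmxA -P_inv mulmxV // mul1mx.
rewrite (bigD1 i) //= big1 => [|j /negbTE ji]; rewrite !mxE ?eqxx ?ji /=.
  by rewrite normr1 expr1n mulr1 addr0.
by rewrite normr0 expr0n mulr0.
Qed.

Lemma eigvec_neq0 i : ctmx P *m (delta_mx i 0 : 'cV_N) != 0.
Proof.
apply/eqP=> /(congr1 (mulmx P)); rewrite mulmxA -P_inv mulmxV // mul1mx mulmx0.
by move=> /matrixP/(_ i 0); rewrite !mxE !eqxx => /eqP; rewrite oner_eq0.
Qed.

Lemma eigenvalue_diagonalized i : eigenvalue H (d 0 i).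
Proof.
apply/eigenvalueP; exists (delta_mx 0 i *m P).
  rewrite HPd -P_inv !mulmxA mulmxK // scalemxAl; congr (_ *m _).
  apply/matrixP=> a b; rewrite mul_mx_diag !mxE ord1 eqxx /=.
  by case: eqP => [->|_]; rewrite ?mulr0 ?mul0r // mulr1 mul1r.
apply/eqP=> /(congr1 (mulmx^~ (invmx P))); rewrite mulmxK // mul0mx.
by move=> /matrixP/(_ 0 i); rewrite !mxE !eqxx => /eqP; rewrite oner_eq0.
Qed.

Lemma diagonalized_of_eigenvalue mu : eigenvalue H mu -> exists i, mu = d 0 i.
Proof.
move=> /eigenvalueP [v vH v_neq0].
have w_neq0 : v *m invmx P != 0.
  by apply: contraNneq v_neq0 => w0; rewrite -(mulmxKV P_unit v) w0 mul0mx.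
have wd : v *m invmx P *m diag_mx d = mu *: (v *m invmx P).
  by rewrite scalemxAl -vH HPd -P_inv !mulmxA mulmxK.
move: (v *m invmx P) w_neq0 wd => w w_neq0 wd.
have [i wi_neq0] : exists i, w 0 i != 0.
  apply/existsP; apply: contraNT w_neq0; rewrite negb_exists => /forallP w0.
  by apply/eqP/rowP=> i; rewrite mxE; apply/eqP/negPn/w0.
exists i; apply: (mulIf wi_neq0).
have := congr1 (fun M : 'rV_N => M 0 i) wd; rewrite /= mul_mx_diag !mxE => e.
by rewrite -e mulrC.
Qed.

Lemma psd_sub_scalar_diagonalized xi :
  xi \is Num.real -> psd (H - xi%:M) <-> forall i, xi <= d 0 i.
Proof.
move=> xi_real; split=> [[_ H_ge0] i|xi_le].
  by rewrite -subr_ge0 -(quad_form_eigvec xi i); apply: H_ge0.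
split=> [|v].
  rewrite /hermitian ctmxB ctmx_scalar conj_Creal //; congr (_ - _).
  exact: diagonalized_hermitian.
rewrite quad_form_diagonalized; apply: sumr_ge0 => i _.
by rewrite mulr_ge0 ?exprn_ge0 // subr_ge0.
Qed.

End UnitaryDiagonalization.

Section Hermitian.
Variables (C : numClosedFieldType) (N : nat).
Implicit Types (H : 'M[C]_N) (l xi : C).

Lemma hermitian_unitary_diagonalization H : hermitian H ->
  exists P, exists d, [/\ P \in unitmx, invmx P = ctmx P,
    H = ctmx P *m diag_mx d *m P & forall i, d 0 i \is Num.real].
Proof.
move=> /hermitian_hermsymmx hH; exists (spectralmx H), (spectral_diag H).
have P_inv : invmx (spectralmx H) = ctmx (spectralmx H).
  by rewrite invmx_unitary ?spectral_unitarymx // ctmx_trmxC.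
split=> //; first exact: spectral_unit.
  by rewrite -P_inv; apply/orthomx_spectralP/hermitian_normalmx.
by move=> i; have /mxOverP := hermitian_spectral_diag_real hH; apply.
Qed.

Lemma lambda_min_exists H : (0 < N)%N -> hermitian H -> exists l, is_lambda_min H l.
Proof.
move=> N_gt0 /hermitian_unitary_diagonalization [P [d [P_unit P_inv HPd d_real]]].
have [i i_min] := exists_real_argmin (Ordinal N_gt0) (f := fun i => d 0 i) d_real.
exists (d 0 i); split; first exact: (eigenvalue_diagonalized P_unit P_inv HPd).
by move=> mu /(diagonalized_of_eigenvalue P_unit P_inv HPd) [j ->].
Qed.

Lemma lambda_min_real H l : hermitian H -> is_lambda_min H l -> l \is Num.real.
Proof.
move=> /hermitian_unitary_diagonalization [P [d [P_unit P_inv HPd d_real]]] [l_eig _].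
by have [i ->] := diagonalized_of_eigenvalue P_unit P_inv HPd l_eig.
Qed.

Lemma psd_sub_scalar_lambda_min H l xi : hermitian H -> is_lambda_min H l ->
  xi \is Num.real -> psd (H - xi%:M) <-> xi <= l.
Proof.
move=> /hermitian_unitary_diagonalization [P [d [P_unit P_inv HPd d_real]]].
move=> [l_eig l_min] xi_real.
rewrite (psd_sub_scalar_diagonalized P_unit P_inv HPd d_real xi_real).
split=> [xi_le|xi_le i].
  by have [i ->] := diagonalized_of_eigenvalue P_unit P_inv HPd l_eig; apply: xi_le.
exact: le_trans xi_le (l_min _ (eigenvalue_diagonalized P_unit P_inv HPd i)).
Qed.

Lemma pd_ctmx_factor H : pd H -> exists2 T, T \in unitmx & H = ctmx T *m T.
Proof.
move=> [/hermitian_unitary_diagonalization [P [d [P_unit P_inv HPd _]]] H_gt0].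
have d_gt0 i : 0 < d 0 i.
  have := H_gt0 _ (eigvec_neq0 P_unit P_inv i).
  by rewrite -[H]subr0 -(raddf0 (@scalar_mx C N)) (quad_form_eigvec P_unit P_inv HPd) subr0.
pose s := \row_i sqrtC (d 0 i).
exists (diag_mx s *m P).
  rewrite unitmx_mul P_unit andbT unitmxE det_diag unitfE.
  by apply/prodf_neq0 => i _; rewrite mxE sqrtC_eq0 gt_eqF.
rewrite ctmxM ctmx_diag HPd mulmxA -[in RHS](mulmxA (ctmx P)) mulmx_diag.
congr (_ *m diag_mx _ *m _); apply/rowP=> i; rewrite !mxE.
by rewrite conj_Creal ?ger0_real ?sqrtC_ge0 ?ltW // -expr2 sqrtCK.
Qed.

End Hermitian.

Lemma sqrtC2_neq0 (C : numClosedFieldType) : sqrtC (2 : C) != 0.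
Proof. by rewrite sqrtC_eq0 pnatr_eq0. Qed.

Lemma sqrtC2_real (C : numClosedFieldType) : sqrtC (2 : C) \is Num.real.
Proof. by rewrite ger0_real // sqrtC_ge0 ler0n. Qed.

Lemma ctmx_Ds (C : numClosedFieldType) n m : ctmx (Ds C n m) = Ds C n m.
Proof.
by rewrite /Ds ctmx_block !ctmx0 ctmx1 ctmx_scalar conj_Creal // rpredV sqrtC2_real.
Qed.

Section WtildeHermitian.
Variables (C : numClosedFieldType) (n m : nat).
Variables (A : 'M[C]_n) (B : 'M[C]_(n, m)) (Cm : 'M[C]_(m, n)) (D : 'M[C]_m).

Lemma Wtilde_hermitian X : hermitian X -> hermitian (Wtilde A B Cm D X).
Proof.
rewrite /hermitian /Wtilde => hX.
by rewrite !ctmx_block ctmx_col ctmx_row !ctmxM !ctmxK hX ctmxD ctmxK addrC.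
Qed.

Lemma Ds_Wtilde_Ds_hermitian X :
  hermitian X -> hermitian (Ds C n m *m Wtilde A B Cm D X *m Ds C n m).
Proof.
move=> /Wtilde_hermitian; rewrite /hermitian => hW.
by rewrite !ctmxM ctmx_Ds hW mulmxA.
Qed.

End WtildeHermitian.

Section StateSpaceModel.
Variables (C : numClosedFieldType) (n m : nat).
Variables (A : 'M[C]_n) (B : 'M[C]_(n, m)) (Cm : 'M[C]_(m, n)) (D : 'M[C]_m).

Lemma Wtilde_similarity T Y : T \in unitmx ->
  ctmx (block_mx (block_mx T 0 0 T) 0 0 1%:M)
    *m Wtilde (T *m A *m invmx T) (T *m B) (Cm *m invmx T) D Y
    *m block_mx (block_mx T 0 0 T) 0 0 1%:M
  = Wtilde A B Cm D (ctmx T *m Y *m T).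
Proof.
move=> T_unit; have cT_unit : ctmx T \in unitmx by rewrite ctmx_unit.
rewrite /Wtilde !ctmx_block !ctmx0 !ctmx1.
rewrite !mulmx_block !mul0mx !mulmx0 !add0r !addr0 !mul1mx !mulmx1.
rewrite !mulmx_block !mul_block_col !mul_row_block.
rewrite !mul0mx !mulmx0 !add0r !addr0 ?mul1mx ?mulmx1.
congr block_mx; first congr block_mx.
- by rewrite !mulmxA mulmxKV.
- by rewrite !ctmxM ctmx_inv !mulmxA mulmxV // mul1mx.
- congr col_mx; first by rewrite !mulmxA.
  by rewrite ctmxM ctmx_inv mulmxA mulmxV // mul1mx.
- congr row_mx; first by rewrite ctmxM !mulmxA.
  by rewrite mulmxKV.
Qed.

Definition diagTTsqrt2 (T : 'M[C]_n) : 'M[C]_(n + n + m) :=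
  block_mx (block_mx T 0 0 T) 0 0 (sqrtC 2)%:M.

Lemma diagTTsqrt2_unit T : T \in unitmx -> diagTTsqrt2 T \in unitmx.
Proof.
rewrite /diagTTsqrt2 !unitmxE !det_ublock det_scalar => T_unit.
by rewrite !unitrM T_unit unitrX // unitfE sqrtC2_neq0.
Qed.

Lemma ctmx_diagTTsqrt2_mul T :
  ctmx (diagTTsqrt2 T) *m diagTTsqrt2 T = diagXX2 m (ctmx T *m T).
Proof.
rewrite /diagTTsqrt2 /diagXX2 !ctmx_block !ctmx0 ctmx_scalar (conj_Creal (sqrtC2_real C)).
rewrite !mulmx_block !mul0mx !mulmx0 !addr0 !add0r mul_scalar_mx scale_scalar_mx.
by rewrite -expr2 sqrtCK.
Qed.

Lemma Ds_mul_diagTTsqrt2 T :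
  Ds C n m *m diagTTsqrt2 T = block_mx (block_mx T 0 0 T) 0 0 1%:M.
Proof.
rewrite /Ds /diagTTsqrt2 mulmx_block !mul0mx !mulmx0 !addr0 !add0r mul1mx.
by rewrite mul_scalar_mx scale_scalar_mx mulVf ?sqrtC2_neq0.
Qed.

Lemma Wtilde_sub_diagXX2_congr T xi : T \in unitmx ->
  ctmx (diagTTsqrt2 T)
    *m (Ds C n m *m Wtilde (T *m A *m invmx T) (T *m B) (Cm *m invmx T) D 1%:M
         *m Ds C n m - xi%:M)
    *m diagTTsqrt2 T
  = Wtilde A B Cm D (ctmx T *m T) - xi *: diagXX2 m (ctmx T *m T).
Proof.
move=> T_unit; rewrite mulmxBr mulmxBl mul_mx_scalar -scalemxAl ctmx_diagTTsqrt2_mul.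
congr (_ - _); have -> : ctmx T *m T = ctmx T *m 1%:M *m T by rewrite mulmx1.
rewrite -(Wtilde_similarity _ T_unit).
by rewrite -Ds_mul_diagTTsqrt2 ctmxM ctmx_Ds !mulmxA.
Qed.

Lemma loewner_ge_Wtilde_diagXX2E T xi : T \in unitmx ->
  loewner_ge (Wtilde A B Cm D (ctmx T *m T)) (xi *: diagXX2 m (ctmx T *m T)) <->
  psd (Ds C n m *m Wtilde (T *m A *m invmx T) (T *m B) (Cm *m invmx T) D 1%:M
         *m Ds C n m - xi%:M).
Proof.
move=> T_unit; rewrite /loewner_ge -Wtilde_sub_diagXX2_congr //.
by symmetry; apply: psd_congrmx; apply: diagTTsqrt2_unit.
Qed.

Lemma Wtilde_ge_diagXX2_mulmx0 X :
  loewner_ge (Wtilde A B Cm D X) (diagXX2 m X) -> X *m A = 0 /\ X *m B = 0.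
Proof.
rewrite /loewner_ge /Wtilde /diagXX2 !opp_block_mx !add_block_mx => W_ge.
split; apply/matrixP=> i j.
- have := psd_offdiag_eq0 (i := lshift m (lshift n i)) (lshift m (rshift n j)) W_ge.
  rewrite !block_mxEul block_mxEur subrr !mxE => /(_ erefl).
  by rewrite subr0.
- have := psd_offdiag_eq0 (i := lshift m (lshift n i)) (rshift (n + n) j) W_ge.
  rewrite !block_mxEul block_mxEur subrr mxE subr0 col_mxEu => /(_ erefl) ->.
  by rewrite mxE.
Qed.

Lemma minimal_nonzero : (0 < n)%N -> minimal A B Cm -> ~ (A = 0 /\ B = 0).
Proof.
move=> n_gt0 minAB [A0 B0]; have [+ _] := minAB 0.
rewrite A0 B0 (raddf0 (@scalar_mx C n)) subr0 row_mx0 mxrank0 => n0.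
by rewrite -n0 in n_gt0.
Qed.

Lemma not_loewner_ge_Wtilde_diagXX2 X : (0 < n)%N -> minimal A B Cm ->
  X \in unitmx -> ~ loewner_ge (Wtilde A B Cm D X) (diagXX2 m X).
Proof.
move=> n_gt0 minAB X_unit /Wtilde_ge_diagXX2_mulmx0 [XA0 XB0].
apply: (minimal_nonzero n_gt0 minAB); split.
  by rewrite -(mulKmx X_unit A) XA0 mulmx0.
by rewrite -(mulKmx X_unit B) XB0 mulmx0.
Qed.

Lemma loewner_ge_Wtilde_lambda_min T l xi : T \in unitmx ->
  is_lambda_min (Ds C n m *m Wtilde (T *m A *m invmx T) (T *m B) (Cm *m invmx T) D 1%:M
                   *m Ds C n m) l ->
  xi \is Num.real ->
  loewner_ge (Wtilde A B Cm D (ctmx T *m T)) (xi *: diagXX2 m (ctmx T *m T)) <-> xi <= l.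
Proof.
move=> T_unit l_min xi_real; rewrite loewner_ge_Wtilde_diagXX2E //.
apply: psd_sub_scalar_lambda_min l_min xi_real.
by apply: Ds_Wtilde_Ds_hermitian; exact: ctmx1.
Qed.

End StateSpaceModel.

Theorem theorem5p1 (C : numClosedFieldType) (n m : nat) (npos : (0 < n)%N)
  (A : 'M[C]_n) (B : 'M[C]_(n, m)) (Cm : 'M[C]_(m, n)) (D : 'M[C]_m)
  (X : 'M[C]_n) :
  minimal A B Cm -> passive A B Cm D -> Xgt A B Cm D X ->
  let holds := fun xi : C =>
    loewner_ge (Wtilde A B Cm D X) (xi *: diagXX2 m X) in
  let is_max := fun xi : C =>
    [/\ xi \is Num.real, holds xi &
        forall xi' : C, xi' \is Num.real -> holds xi' -> xi' <= xi] in
  exists xistar : C,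
    [/\ is_max xistar,
        (forall y : C, is_max y -> y = xistar),
        xistar < 1 &
        forall T : 'M[C]_n, T \in unitmx -> X = ctmx T *m T ->
          is_lambda_min
            (Ds C n m *m Wtilde (T *m A *m invmx T) (T *m B) (Cm *m invmx T) D 1%:M
               *m Ds C n m) xistar].
Proof.
move=> minAB _ [_ [_ X_pd]] holds is_max.
pose H T := Ds C n m *m Wtilde (T *m A *m invmx T) (T *m B) (Cm *m invmx T) D 1%:M
              *m Ds C n m.
have H_herm T : hermitian (H T) by apply: Ds_Wtilde_Ds_hermitian; exact: ctmx1.
have dim_gt0 : (0 < n + n + m)%N by rewrite !addn_gt0 npos.
have [T0 T0_unit XT0] := pd_ctmx_factor X_pd.
have [l l_min] := lambda_min_exists dim_gt0 (H_herm T0).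
have l_real := lambda_min_real (H_herm T0) l_min.
have holdsE xi : xi \is Num.real -> holds xi <-> xi <= l.
  by rewrite /holds XT0; apply: loewner_ge_Wtilde_lambda_min.
have holds_l : holds l by apply/(holdsE l l_real).
exists l; split.
- by split=> // xi xi_real /(holdsE xi xi_real).
- move=> y [y_real y_holds y_max]; apply/le_anti/andP; split.
    exact/(holdsE y y_real).
  exact: y_max l l_real holds_l.
- rewrite real_ltNge ?rpred1 //; apply/negP => /(holdsE 1 (rpred1 _)).
  rewrite /holds scale1r; apply: not_loewner_ge_Wtilde_diagXX2 npos minAB _.
  by rewrite XT0 unitmx_mul ctmx_unit T0_unit.
- move=> T T_unit XT; have [lT lT_min] := lambda_min_exists dim_gt0 (H_herm T).
  suff -> : l = lT by exact: lT_min.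
  have lT_real := lambda_min_real (H_herm T) lT_min.
  have holds_lT xi : xi \is Num.real -> holds xi <-> xi <= lT.
    by rewrite /holds XT; apply: loewner_ge_Wtilde_lambda_min.
  apply/le_anti/andP; split; first exact/(holds_lT l l_real).
  by apply/(holdsE lT lT_real)/(holds_lT lT lT_real).
Qed.
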